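(* In the ef-MCA model of the context with a two-parameter exponential family distribution $p(y;\vec{\eta})$ whose sufficient statistics satisfy $T_1(y)=y$, the condition on $W_{dh}$ (for the derivative of the lower bound $\mathcal{F}(q,\Theta)$ with respect to $W_{dh}$ and $V_{dh}$ to vanish, together with the corresponding condition $V_{dh}=\sum_n\langle\mathcal{A}_{dh}\rangle_{q^{(n)}}T_2(y_d^{(n)})/\sum_n\langle\mathcal{A}_{dh}\rangle_{q^{(n)}}$) is $$W_{dh}=\frac{\sum_{n=1}^N\langle\mathcal{A}_{dh}(\vec{s},\Theta)\rangle_{q^{(n)}}\,y_d^{(n)}}{\sum_{n=1}^N\langle\mathcal{A}_{dh}(\vec{s},\Theta)\rangle_{q^{(n)}}}.$$
   Context: Exponential family: $p(y;\vec{\eta})=h(y)\exp(\vec{\eta}^T\vec{T}(y)-A(\vec{\eta}))$, $\vec{T}(y)=(T_1(y),T_2(y))^T$, finite $A$. Mean value parameters $\vec{w}=\langle\vec{T}(y)\rangle_{p(y;\vec{\eta})}$, assumed invertible with inverse $\vec{\Phi}$. $F(w,v)=\langle y\rangle_{p(y;\vec{\Phi}(w,v))}$, $M_{dh}(\Theta)=F(W_{dh},V_{dh})$ for matrices $W,V\in\mathbb{R}^{D\times H}$ in $\Theta$. For $\vec{s}\in\{0,1\}^H$: $h(d,\vec{s},\Theta)=\mathrm{argmax}_h\{M_{dh}(\Theta)s_h\}$, $\bar{W}_d=W_{d\,h(d,\vec{s},\Theta)}$, $\bar{V}_d=V_{d\,h(d,\vec{s},\Theta)}$, $\vec{\tilde{\eta}}_d(\vec{s},\Theta)=\vec{\Phi}(\bar{W}_d,\bar{V}_d)$.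 Model: $p(\vec{s}\mid\Theta)=\prod_h\pi_h^{s_h}(1-\pi_h)^{1-s_h}$, $p(\vec{y}\mid\vec{s},\Theta)=\prod_d p(y_d;\vec{\tilde{\eta}}_d(\vec{s},\Theta))$. Data $\vec{y}^{(1)},\dots,\vec{y}^{(N)}$, distributions $q^{(n)}$ on $\{0,1\}^H$, lower bound $\mathcal{F}(q,\Theta)=\sum_n\sum_{\vec{s}}q^{(n)}(\vec{s})\{\sum_d\log p(y_d^{(n)};\vec{\tilde{\eta}}_d(\vec{s},\Theta))+\sum_h\log p(s_h\mid\Theta)\}+\mathcal{H}(q)$ with $\mathcal{H}$ the entropy. $\mathcal{A}_{dh}(\vec{s},\Theta)=1$ if $h=h(d,\vec{s},\Theta)$ and $0$ otherwise; $\langle\cdot\rangle_{q^{(n)}}$ is expectation under $q^{(n)}$. *)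

From HB Require Import structures.
From mathcomp Require Import all_boot all_order all_algebra.
From mathcomp Require Import all_classical all_reals all_analysis.
Import Order.TTheory GRing.Theory Num.Theory.
Import numFieldNormedType.Exports.
Set Implicit Arguments.
Unset Strict Implicit.
Unset Printing Implicit Defensive.
Local Open Scope classical_set_scope.
Local Open Scope ring_scope.

Section ExpFam.
Variable R : realType.
Variable mu : {measure set R -> \bar R}.
Variables (hb T2 : R -> R).

Definition dotT (eta : R * R) (y : R) : R := eta.1 * y + eta.2 * T2 y.

Definition partition (eta : R * R) : \bar R :=
  (\int[mu]_y (hb y * expR (dotT eta y))%:E)%E.

Definition natparam : set (R * R) :=
  [set eta | (0 < partition eta)%E /\ (partition eta < +oo)%E].

Definition logpart (eta : R * R) : R := ln (fine (partition eta)).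

Definition dens (y : R) (eta : R * R) : R :=
  hb y * expR (dotT eta y - logpart eta).

Definition mean_param (eta : R * R) : R * R :=
  (fine (\int[mu]_y (y * dens y eta)%:E)%E,
   fine (\int[mu]_y (T2 y * dens y eta)%:E)%E).

End ExpFam.

Section Model.
Variable R : realType.
Variable mu : {measure set R -> \bar R}.
Variables (hb T2 : R -> R).
Variables (D H N : nat).
(* Phi : inverse of the mean value parametrization, (w, v) |-> eta *)
Variable Phi : R * R -> R * R.

Definition config := {ffun 'I_H -> bool}.

Definition Fmean (w v : R) : R := (mean_param mu hb T2 (Phi (w, v))).1.

Definition Mmat (W V : 'M[R]_(D, H)) (d : 'I_D) (h : 'I_H) : R :=
  Fmean (W d h) (V d h).

(* h(d, s, Theta) = argmax_h { M_dh(Theta) s_h }.  [i0] is only the default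
   required by [arg max]; since the range is all of 'I_H the result does not
   depend on it.  Ties are broken by the library's (fixed) choice. *)
Definition hsel (i0 : 'I_H) (W V : 'M[R]_(D, H)) (d : 'I_D) (s : config) : 'I_H :=
  Order.arg_max i0 xpredT (fun h => Mmat W V d h * (s h)%:R).

Definition Asel (i0 : 'I_H) (W V : 'M[R]_(D, H)) (d : 'I_D) (h : 'I_H)
  (s : config) : R := (hsel i0 W V d s == h)%:R.

Definition Aexp (q : 'I_N -> config -> R) (i0 : 'I_H) (W V : 'M[R]_(D, H))
  (d : 'I_D) (h : 'I_H) (n : 'I_N) : R :=
  \sum_(s : config) q n s * Asel i0 W V d h s.

Definition logprior (pi : 'I_H -> R) (h : 'I_H) (s : config) : R :=
  if s h then ln (pi h) else ln (1 - pi h).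

Definition entropy (q : 'I_N -> config -> R) : R :=
  \sum_(n < N) - \sum_(s : config) q n s * ln (q n s).

(* Lower bound F(q, Theta') in which the selection h(d,s,.) is evaluated at
   Theta0 = (W0, V0) while all parameters are taken from Theta' = (W, V).
   With Theta' = Theta0 this is exactly F(q, Theta). *)
Definition Ffix (Y : 'I_N -> 'I_D -> R) (q : 'I_N -> config -> R)
  (pi : 'I_H -> R) (i0 : 'I_H) (W0 V0 W V : 'M[R]_(D, H)) : R :=
  \sum_(n < N) \sum_(s : config) q n s *
     (\sum_(d < D)
        ln (dens mu hb T2 (Y n d)
              (Phi (W d (hsel i0 W0 V0 d s), V d (hsel i0 W0 V0 d s))))
      + \sum_(h < H) logprior pi h s)
  + entropy q.

Definition Fbound Y q pi i0 (W V : 'M[R]_(D, H)) : R :=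
  Ffix Y q pi i0 W V W V.

Definition upd (W : 'M[R]_(D, H)) (d : 'I_D) (h : 'I_H) (t : R) : 'M[R]_(D, H) :=
  \matrix_(i, j) (if (i == d) && (j == h) then t else W i j).

(* "The derivative of F(q,Theta) w.r.t. W_dh and V_dh vanishes" (the
   argmax-selection A_dh(s,Theta) being held fixed, as in the paper's
   derivation). *)
Definition grad_vanishes Y q pi (W V : 'M[R]_(D, H)) (d : 'I_D) (h : 'I_H) : Prop :=
  is_derive (W d h) (1 : R) (fun t => Ffix Y q pi h W V (upd W d h t) V) 0 /\
  is_derive (V d h) (1 : R) (fun t => Ffix Y q pi h W V W (upd V d h t)) 0.

End Model.

(* Near an interior natural parameter eta, the unnormalised densities at the
   four corners of a small box around eta give one integrable envelope that
   dominates both |T(y)| h(y) exp(eta . T(y)) and the second-order Taylor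
   remainder of h(y) exp(eta' . T(y)) for eta' in the box.  Hence the partition
   function Z has gradient E[T] Z at eta with a quadratic remainder, and by the
   chain rule along the coordinate lines of Phi the score of y_d at
   Phi(W_dh, V_dh) has partial derivatives J_i . (y_d - W_dh, T_2(y_d) - V_dh).
   With the selection h(d, s, Theta) frozen, F(q, Theta) depends on W_dh, V_dh
   only through the terms with h(d, s, Theta) = h, each weighted by
   <A_dh>_{q^(n)}, so its two partial derivatives are J_1 . g and J_2 . g with
   g = (sum_n a_n y_d - W_dh sum_n a_n, sum_n a_n T_2(y_d) - V_dh sum_n a_n).
   The Jacobian of Phi being invertible, both vanish iff g = 0. *)

From HB Require Import structures.
From mathcomp Require Import all_boot all_order all_algebra.
From mathcomp Require Import all_classical all_reals all_analysis.
From mathcomp Require Import ring lra.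
Import Order.TTheory GRing.Theory Num.Theory.
Import numFieldNormedType.Exports.
Local Open Scope classical_set_scope.
Local Open Scope ring_scope.

Section RealDerivative.
Context {R : realType}.

Lemma is_derive1P (f : R -> R) (x l : R) :
  is_derive x 1 f l <-> (fun h => h^-1 * (f (h + x) - f x)) @ 0^' --> l.
Proof.
have E : (fun h : R => h^-1 *: ((f \o shift x) (h *: 1) - f x)) =
         (fun h => h^-1 * (f (h + x) - f x)).
  by apply: funext => h /=; rewrite [h *: 1]mulr1.
split=> [[fx <-]|fx]; first by move: fx; rewrite /derivable /derive E.
apply: DeriveDef; first by rewrite /derivable E; exact: cvgP fx.
by rewrite /derive E; exact: cvg_lim.
Qed.

Lemma cvg_increment0 {u : R -> R} {x d : R} :
  is_derive x 1 u d -> (fun h => u (h + x) - u x) @ 0^' --> 0.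
Proof.
move=> /is_derive1P du.
have -> : (fun h => u (h + x) - u x) = (fun h => h * (h^-1 * (u (h + x) - u x))).
  apply: funext => h; have [->|h0] := eqVneq h 0; first by rewrite add0r subrr mul0r.
  by rewrite mulVKf.
rewrite -[X in _ --> X](mul0r d); apply: cvgM du; exact/continuous_withinNx/cvg_id.
Qed.

Lemma cvg_quad_remainder {u1 u2 r : R -> R} {x d1 d2 C : R} :
  is_derive x 1 u1 d1 -> is_derive x 1 u2 d2 ->
  (\forall h \near 0^',
     `|r h| <= C * (`|u1 (h + x) - u1 x| + `|u2 (h + x) - u2 x|) ^+ 2) ->
  (fun h => h^-1 * r h) @ 0^' --> 0.
Proof.
move=> /is_derive1P du1 /is_derive1P du2 rC.
set q1 := fun h => _ in du1; set q2 := fun h => _ in du2.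
pose B h := C * `|h| * (`|q1 h| + `|q2 h|) ^+ 2.
have B0 : B @ 0^' --> 0.
  have id0 : (fun h : R => h) @ 0^' --> 0 by exact/continuous_withinNx/cvg_id.
  rewrite [X in _ --> X](_ : 0 = C * `|0 : R| * (`|d1| + `|d2|) ^+ 2); last first.
    by rewrite normr0 mulr0 mul0r.
  apply: cvgM; first by apply: cvgMr; exact: cvg_norm id0.
  by rewrite expr2; apply: cvgM; apply: cvgD; apply: cvg_norm.
apply/cvgr0Pnorm_le => eps eps0; near=> h.
have h0 : h != 0 by near: h; exact: nbhs_dnbhs_neq.
have Bh : `|B h| <= eps by near: h; exact: (cvgr0Pnorm_le _).1 B0 _ eps0.
apply: le_trans (le_trans (ler_norm _) Bh).
have incr (u : R -> R) : `|u (h + x) - u x| = `|h| * `|h^-1 * (u (h + x) - u x)|.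
  by rewrite -normrM mulVKf.
rewrite normrM normfV ler_pdivrMl ?normr_gt0 // /B.
have -> : `|h| * (C * `|h| * (`|q1 h| + `|q2 h|) ^+ 2) =
          C * (`|h| * `|q1 h| + `|h| * `|q2 h|) ^+ 2 by ring.
by rewrite /q1 /q2 -!incr; near: h.
Unshelve. all: by end_near. Qed.

End RealDerivative.

Section PairDerivative.
Context {R : realType} {V U U' : normedModType R}.

Lemma is_derive_fst {f : V -> U * U'} {x v : V} :
  derivable f x v -> is_derive x v (fst \o f) ('D_v f x).1.
Proof.
move=> df.
have cv : (fst \o fun h => h^-1 *: ((f \o shift x) (h *: v) - f x)) @ 0^' -->
          ('D_v f x).1.
  by move: df; rewrite /derivable /derive => df; apply: cvg_comp df _; exact: cvg_fst.
by split; [rewrite /derivable; exact: cvgP cv | rewrite /derive; exact: cvg_lim cv].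
Qed.

Lemma is_derive_snd {f : V -> U * U'} {x v : V} :
  derivable f x v -> is_derive x v (snd \o f) ('D_v f x).2.
Proof.
move=> df.
have cv : (snd \o fun h => h^-1 *: ((f \o shift x) (h *: v) - f x)) @ 0^' -->
          ('D_v f x).2.
  by move: df; rewrite /derivable /derive => df; apply: cvg_comp df _; exact: cvg_snd.
by split; [rewrite /derivable; exact: cvgP cv | rewrite /derive; exact: cvg_lim cv].
Qed.

Lemma is_derive_partial1 {f : R * R -> U} {w v : R} :
  derivable f (w, v) (1, 0) -> is_derive w 1 (fun t => f (t, v)) ('D_(1, 0) f (w, v)).
Proof.
have q : (fun h : R => h^-1 *: (((fun t => f (t, v)) \o shift w) (h *: 1) - f (w, v))) =
         (fun h => h^-1 *: ((f \o shift (w, v)) (h *: (1, 0)) - f (w, v))).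
  apply: funext => h /=; congr (_ *: (f _ - _)).
  by congr (_, _); rewrite /= scaler0 add0r.
by split; rewrite /derivable /derive q.
Qed.

Lemma is_derive_partial2 {f : R * R -> U} {w v : R} :
  derivable f (w, v) (0, 1) -> is_derive v 1 (fun t => f (w, t)) ('D_(0, 1) f (w, v)).
Proof.
have q : (fun h : R => h^-1 *: (((fun t => f (w, t)) \o shift v) (h *: 1) - f (w, v))) =
         (fun h => h^-1 *: ((f \o shift (w, v)) (h *: (0, 1)) - f (w, v))).
  apply: funext => h /=; congr (_ *: (f _ - _)).
  by congr (_, _); rewrite /= scaler0 add0r.
by split; rewrite /derivable /derive q.
Qed.

End PairDerivative.

Section QuadraticChainRule.
Context {R : realType}.

Definition has_grad_quad (Z : R * R -> R) (p m : R * R) :=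
  exists C e, 0 < e /\ forall a b, `|a| <= e -> `|b| <= e ->
    `|Z (p.1 + a, p.2 + b) - Z p - (a * m.1 + b * m.2)| <= C * (`|a| + `|b|) ^+ 2.

Lemma is_derive_comp_grad_quad {Z : R * R -> R} {c : R -> R * R} {x : R}
    {dc m : R * R} :
  has_grad_quad Z (c x) m -> is_derive x 1 c dc ->
  is_derive x 1 (Z \o c) (dc.1 * m.1 + dc.2 * m.2).
Proof.
move=> [C [e [e0 Zm]]] [cx <-].
have d1 := is_derive_fst cx; have d2 := is_derive_snd cx.
set u1 := fst \o c in d1; set u2 := snd \o c in d2.
pose r h := Z (c (h + x)) - Z (c x) -
  ((u1 (h + x) - u1 x) * m.1 + (u2 (h + x) - u2 x) * m.2).
apply/is_derive1P.
have -> : (fun h => h^-1 * ((Z \o c) (h + x) - (Z \o c) x)) =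
    (fun h => h^-1 * (u1 (h + x) - u1 x) * m.1 +
              h^-1 * (u2 (h + x) - u2 x) * m.2 + h^-1 * r h).
  by apply: funext => h; rewrite /r /=; ring.
rewrite -[X in _ --> X]addr0; apply: cvgD.
  by apply: cvgD; apply: cvgMl; apply/is_derive1P.
apply: (cvg_quad_remainder d1 d2 (C := C)).
have small (u : R -> R) (d : R) :
    is_derive x 1 u d -> \forall h \near 0^', `|u (h + x) - u x| <= e.
  by move=> du; exact: (cvgr0Pnorm_le _).1 (cvg_increment0 du) _ e0.
near=> h.
have h1 : `|u1 (h + x) - u1 x| <= e by near: h; exact: small _ _ d1.
have h2 : `|u2 (h + x) - u2 x| <= e by near: h; exact: small _ _ d2.
by move: (Zm _ _ h1 h2); rewrite /u1 /u2 /= !subrKC -surjective_pairing.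
Unshelve. all: by end_near. Qed.

End QuadraticChainRule.

Lemma interior_box {R : realType} (A : set (R * R)) (p : R * R) :
  interior A p -> exists2 e : R, 0 < e &
    forall a b, `|a| <= e -> `|b| <= e -> A (p.1 + a, p.2 + b).
Proof.
move=> /nbhs_ballP [r r0 Ar].
exists (r / 2) => [|a b ae be]; first by rewrite divr_gt0.
apply: Ar; split => /=; rewrite -ball_normE /ball_ /= opprD addrA subrr add0r normrN.
  by apply: le_lt_trans ae _; rewrite ltr_pdivrMr // ltr_pMr // ltr1n.
by apply: le_lt_trans be _; rewrite ltr_pdivrMr // ltr_pMr // ltr1n.
Qed.

Section ExpBounds.
Context {R : realType}.

Lemma expR_remainder_bounds (x : R) : 0 <= expR x - 1 - x <= x ^+ 2 * expR `|x|.
Proof.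
have := expR_ge1Dx x; have := expR_ge1Dx (- x).
have := expR_gt0 x; have := expR_gt0 (- x).
have : expR x * expR (- x) = 1 by rewrite -expRD subrr expR0.
move=> ExN ? ? ? ?; apply/andP; split; first lra.
have [x0|x0] := leP 0 x.
  rewrite ger0_norm //; have [x1|x1] := leP 1 x; first nra.
  have : expR x * (1 - x) <= 1 by nra.
  nra.
rewrite ltr0_norm //; have : expR x * (1 - x) <= 1 by nra.
have : (expR x - 1 - x) * (1 - x) <= x ^+ 2 by nra.
nra.
Qed.

Lemma sqr_le_expR (u : R) : 0 <= u -> u ^+ 2 <= 2 * expR u.
Proof.
move=> u0; have := expR_ge1Dxn 1 u0; rewrite (_ : 2`!%:R = 2 :> R) //.
have := expR_gt0 u; lra.
Qed.

(* The constant [8 / e ^+ 2] comes from [u ^+ 2 <= 2 * expR u] at [u = e / 2 * s]. *)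
Lemma expR_remainder_le {x k s e : R} : 0 < e -> 0 <= s ->
  `|x| <= k * s -> `|x| <= e / 2 * s ->
  expR x - 1 - x <= 8 / e ^+ 2 * k ^+ 2 * expR (e * s).
Proof.
move=> e0 s0 xk xe; set P := expR (e / 2 * s).
have P0 : 0 <= P := expR_ge0 _.
have PP : P * P = expR (e * s) by rewrite -expRD -mulrDl -splitr.
have x2 : x ^+ 2 <= k ^+ 2 * s ^+ 2.
  rewrite -exprMn -real_normK ?num_real //.
  by rewrite lerXn2r ?nnegrE ?normr_ge0 //; apply: le_trans xk.
have s2 : s ^+ 2 <= 8 / e ^+ 2 * P.
  have es0 : 0 <= e / 2 * s by rewrite mulr_ge0 // divr_ge0 // ltW.
  have -> : s ^+ 2 = 4 / e ^+ 2 * (e / 2 * s) ^+ 2 by field; rewrite gt_eqF.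
  rewrite (_ : 8 / e ^+ 2 * P = 4 / e ^+ 2 * (2 * P)); last by ring.
  by apply: ler_wpM2l; [rewrite divr_ge0 // sqr_ge0 | exact: sqr_le_expR].
have xP : expR `|x| <= P by rewrite ler_expR.
have [_ rem] := andP (expR_remainder_bounds x).
apply: le_trans rem _; rewrite -PP.
apply: le_trans (ler_pM (sqr_ge0 _) (expR_ge0 _) x2 xP) _.
apply: le_trans (ler_wpM2r P0 (ler_wpM2l (sqr_ge0 k) s2)) _.
by rewrite le_eqVlt; apply/orP; left; apply/eqP; ring.
Qed.

End ExpBounds.

Section IntegrableEFin.
Context {d : measure_display} {T : measurableType d} {R : realType}.
Variables (mu : {measure set T -> \bar R}) (D : set T) (mD : measurable D).
Implicit Types f g : T -> R.

Lemma integrableRD {f g} : mu.-integrable D (EFin \o f) ->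
  mu.-integrable D (EFin \o g) -> mu.-integrable D (EFin \o (fun x => f x + g x)).
Proof. by move=> If Ig; apply: eq_integrable (integrableD mD If Ig). Qed.

Lemma integrableRB {f g} : mu.-integrable D (EFin \o f) ->
  mu.-integrable D (EFin \o g) -> mu.-integrable D (EFin \o (fun x => f x - g x)).
Proof. by move=> If Ig; apply: eq_integrable (integrableB mD If Ig). Qed.

Lemma integrableRZl (k : R) {f} : mu.-integrable D (EFin \o f) ->
  mu.-integrable D (EFin \o (fun x => k * f x)).
Proof. by move=> If; apply: eq_integrable (integrableZl mD k If). Qed.

End IntegrableEFin.

Section ExpFamilyPartition.
Context {R : realType}.
Variables (mu : {measure set R -> \bar R}) (hb T2 : R -> R).
Hypotheses (mhb : measurable_fun setT hb) (hb0 : forall y, 0 <= hb y)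
  (mT2 : measurable_fun setT T2).

Definition udens (eta : R * R) (y : R) : R := hb y * expR (dotT T2 eta y).

Definition Zpart (eta : R * R) : R := \int[mu]_y udens eta y.

Definition umoments (eta : R * R) : R * R :=
  (\int[mu]_y (y * udens eta y), \int[mu]_y (T2 y * udens eta y)).

Lemma udens_ge0 eta y : 0 <= udens eta y.
Proof. by rewrite mulr_ge0 ?expR_ge0. Qed.

Lemma measurable_udens eta : measurable_fun setT (udens eta).
Proof.
apply: measurable_realfun.measurable_funM => //; apply: measurableT_comp => //.
by apply: measurable_realfun.measurable_funD; apply: measurable_realfun.measurable_funM.
Qed.

Lemma udens_shift (p : R * R) a b y :
  udens (p.1 + a, p.2 + b) y = udens p y * expR (a * y + b * T2 y).
Proof. by rewrite /udens /dotT /= -mulrA -expRD; congr (_ * expR _); ring. Qed.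

Lemma integrable_udens {eta} :
  natparam mu hb T2 eta -> mu.-integrable setT (EFin \o udens eta).
Proof.
move=> [_ fin]; apply/integrableP; split.
  by apply/measurable_realfun.measurable_EFinP; exact: measurable_udens.
by under eq_integral do rewrite /= ger0_norm ?udens_ge0//.
Qed.

Lemma Zpart_gt0 {eta} : natparam mu hb T2 eta -> 0 < Zpart eta.
Proof. by case=> Z0 Zfin; apply: fine_gt0; rewrite Z0 Zfin. Qed.

Lemma logpartE eta : logpart mu hb T2 eta = ln (Zpart eta).
Proof. by []. Qed.

Lemma densE eta y : natparam mu hb T2 eta ->
  dens mu hb T2 y eta = udens eta y / Zpart eta.
Proof.
move=> /Zpart_gt0 Z0.
by rewrite /dens logpartE expRD expRN lnK ?posrE // mulrA.
Qed.

Section NaturalParameterBox.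
Context {p : R * R} {e : R}.
Hypotheses (e0 : 0 < e) (box : forall a b, `|a| <= e -> `|b| <= e ->
  natparam mu hb T2 (p.1 + a, p.2 + b)).

Definition envelope (y : R) : R :=
  udens (p.1 + e, p.2 + e) y + udens (p.1 + e, p.2 - e) y +
  udens (p.1 - e, p.2 + e) y + udens (p.1 - e, p.2 - e) y.

Lemma envelope_ge y : udens p y * expR (e * (`|y| + `|T2 y|)) <= envelope y.
Proof.
have expR_norm (z : R) : expR (e * `|z|) <= expR (e * z) + expR (- (e * z)).
  have [z0|z0] := leP 0 z; last rewrite ltr0_norm // mulrN.
    by rewrite ger0_norm //; have := expR_ge0 (- (e * z)); lra.
  by have := expR_ge0 (e * z); lra.
have sum4 : expR (e * (`|y| + `|T2 y|)) <=
    expR (e * y + e * T2 y) + expR (e * y + - e * T2 y) +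
    expR (- e * y + e * T2 y) + expR (- e * y + - e * T2 y).
  rewrite mulrDr expRD; apply: le_trans (ler_pM (expR_ge0 _) (expR_ge0 _)
    (expR_norm y) (expR_norm (T2 y))) _.
  by rewrite !expRD !mulNr !expRN le_eqVlt; apply/orP; left; apply/eqP; ring.
rewrite /envelope !udens_shift; apply: le_trans (ler_wpM2l (udens_ge0 _ _) sum4) _.
by rewrite !mulrDr.
Qed.

Lemma envelope_ge0 y : 0 <= envelope y.
Proof. by rewrite !addr_ge0 // udens_ge0. Qed.

Lemma integrable_envelope : mu.-integrable setT (EFin \o envelope).
Proof.
have ne : `|e| <= e by rewrite ger0_norm // ltW.
have nNe : `|- e| <= e by rewrite normrN.
have iu a b : `|a| <= e -> `|b| <= e ->
    mu.-integrable setT (EFin \o udens (p.1 + a, p.2 + b)).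
  by move=> ae be; apply: integrable_udens => //; exact: box.
rewrite /envelope.
by repeat (apply: (integrableRD mu); first exact: measurableT); exact: iu.
Qed.

Lemma mul_udens_le_envelope (z y : R) : `|z| <= `|y| + `|T2 y| ->
  `|z * udens p y| <= e^-1 * envelope y.
Proof.
move=> zy; rewrite normrM (ger0_norm (udens_ge0 _ _)).
have ez : e * `|z| <= expR (e * (`|y| + `|T2 y|)).
  apply: le_trans (expR_ge1Dx _); rewrite -[X in X <= _]add0r.
  by apply: lerD => //; apply: ler_wpM2l => //; exact: ltW.
rewrite -(ler_pM2l e0) mulVKf ?gt_eqF // mulrA mulrC.
by apply: le_trans (envelope_ge y); apply: ler_wpM2l => //; exact: udens_ge0.
Qed.

Lemma natparam_box_center : natparam mu hb T2 p.
Proof.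
have e00 : `|0 : R| <= e by rewrite normr0 ltW.
by have := box _ _ e00 e00; rewrite !addr0 -surjective_pairing.
Qed.

Lemma integrable_mul_udens (z : R -> R) : measurable_fun setT z ->
  (forall y, `|z y| <= `|y| + `|T2 y|) ->
  mu.-integrable setT (EFin \o (fun y => z y * udens p y)).
Proof.
move=> mz zy.
have iE : mu.-integrable setT (EFin \o (fun y => e^-1 * envelope y)).
  by apply: (integrableRZl mu) => //; exact: integrable_envelope.
apply: le_integrable iE => //.
  apply/measurable_realfun.measurable_EFinP.
  by apply: measurable_realfun.measurable_funM => //; exact: measurable_udens.
move=> y _ /=; rewrite lee_fin [leRHS]ger0_norm; first exact: mul_udens_le_envelope.
by rewrite mulr_ge0 ?envelope_ge0 // invr_ge0 ltW.
Qed.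

Lemma integrable_moment1 : mu.-integrable setT (EFin \o (fun y => y * udens p y)).
Proof. by apply: integrable_mul_udens => // y; rewrite lerDl. Qed.

Lemma integrable_moment2 :
  mu.-integrable setT (EFin \o (fun y => T2 y * udens p y)).
Proof. by apply: integrable_mul_udens => // y; rewrite lerDr. Qed.

Lemma udens_taylor a b y : `|a| <= e / 2 -> `|b| <= e / 2 ->
  `|udens (p.1 + a, p.2 + b) y - udens p y
     - (a * (y * udens p y) + b * (T2 y * udens p y))|
   <= 8 / e ^+ 2 * (`|a| + `|b|) ^+ 2 * envelope y.
Proof.
move=> ae be; rewrite udens_shift.
set u := udens p y; set x := a * y + b * T2 y; set s := `|y| + `|T2 y|.
have -> : u * expR x - u - (a * (y * u) + b * (T2 y * u)) =
          u * (expR x - 1 - x) by rewrite /x; ring.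
have [rem0 _] := andP (expR_remainder_bounds x).
have u0 : 0 <= u by exact: udens_ge0.
rewrite normrM (ger0_norm u0) (ger0_norm rem0).
have s0 : 0 <= s by rewrite addr_ge0.
have xs : `|x| <= `|a| * `|y| + `|b| * `|T2 y|.
  by apply: le_trans (ler_normD _ _) _; rewrite !normrM.
have := normr_ge0 a; have := normr_ge0 b.
have := normr_ge0 y; have := normr_ge0 (T2 y) => ? ? ? ?.
have xk : `|x| <= (`|a| + `|b|) * s by rewrite /s; nra.
have xe : `|x| <= e / 2 * s by rewrite /s; nra.
apply: le_trans (ler_wpM2l u0 (expR_remainder_le e0 s0 xk xe)) _.
set c := 8 / e ^+ 2 * _; rewrite mulrCA; apply: ler_wpM2l; last exact: envelope_ge.
by rewrite mulr_ge0 ?sqr_ge0 // divr_ge0 // ltW // exprn_gt0.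
Qed.

Lemma Zpart_grad_quad : has_grad_quad Zpart p (umoments p).
Proof.
exists (8 / e ^+ 2 * \int[mu]_y envelope y), (e / 2).
split; first by rewrite divr_gt0.
move=> a b ae be.
have ee : e / 2 <= e by rewrite ler_pdivrMr // ler_peMr // ?ler1n // ltW.
have iab := integrable_udens (box _ _ (le_trans ae ee) (le_trans be ee)).
have i0 := integrable_udens natparam_box_center.
have i1 := integrableRZl mu _ measurableT a integrable_moment1.
have i2 := integrableRZl mu _ measurableT b integrable_moment2.
have i12 := integrableRD mu _ measurableT i1 i2.
have i10 := integrableRB mu _ measurableT iab i0.
have irem := integrableRB mu _ measurableT i10 i12.
have -> : Zpart (p.1 + a, p.2 + b) - Zpart p -
    (a * (umoments p).1 + b * (umoments p).2) =
  \int[mu]_y (udens (p.1 + a, p.2 + b) y - udens p y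
               - (a * (y * udens p y) + b * (T2 y * udens p y))).
  rewrite RintegralB // RintegralB // RintegralD //.
  by rewrite !RintegralZl //; [exact: integrable_moment2 | exact: integrable_moment1].
apply: le_trans (le_normr_Rintegral _ _) _ => //.
have iK := integrableRZl mu _ measurableT (8 / e ^+ 2 * (`|a| + `|b|) ^+ 2)
  integrable_envelope.
apply: le_trans (le_Rintegral _ (integrable_norm irem) iK _) _ => //.
  by move=> y _; exact: udens_taylor.
by rewrite RintegralZl // ?integrable_envelope // mulrAC.
Qed.

Lemma mean_paramE :
  mean_param mu hb T2 p = ((umoments p).1 / Zpart p, (umoments p).2 / Zpart p).
Proof.
have dE y := densE p y natparam_box_center.
rewrite /mean_param -![fine _]/(Rintegral mu setT _); congr pair.
  under eq_Rintegral do rewrite dE mulrA.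
  by rewrite RintegralZr //; exact: integrable_moment1.
under eq_Rintegral do rewrite dE mulrA.
by rewrite RintegralZr //; exact: integrable_moment2.
Qed.

End NaturalParameterBox.

Lemma is_derive_logpart {c : R -> R * R} {x : R} {dc : R * R} :
  interior (natparam mu hb T2) (c x) -> is_derive x 1 c dc ->
  is_derive x 1 (logpart mu hb T2 \o c)
    (dc.1 * (mean_param mu hb T2 (c x)).1 + dc.2 * (mean_param mu hb T2 (c x)).2).
Proof.
move=> /interior_box [e e0 box] dcx.
have Z0 := Zpart_gt0 (natparam_box_center e0 box).
have dZ := is_derive_comp_grad_quad (Zpart_grad_quad e0 box) dcx.
rewrite (mean_paramE e0 box) /=.
apply: is_derive_eq (is_derive1_comp (is_derive1_ln Z0) dZ) _.
by rewrite /=; field; rewrite gt_eqF.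
Qed.

Lemma is_derive_ln_dens (y : R) {c : R -> R * R} {x : R} {dc : R * R} :
  0 < hb y -> interior (natparam mu hb T2) (c x) -> is_derive x 1 c dc ->
  is_derive x 1 (fun t => ln (dens mu hb T2 y (c t)))
    (dc.1 * (y - (mean_param mu hb T2 (c x)).1) +
     dc.2 * (T2 y - (mean_param mu hb T2 (c x)).2)).
Proof.
move=> hy cint dcx; have [cx dcE] := dcx.
have d1 := is_deriveZ y (is_derive_fst cx).
have d2 := is_deriveZ (T2 y) (is_derive_snd cx).
have dl := is_derive_logpart cint dcx.
have D := is_deriveB (is_deriveD (is_derive_cst (ln (hb y)) x 1) (is_deriveD d1 d2)) dl.
have -> : (fun t => ln (dens mu hb T2 y (c t))) = (fun t =>
    ln (hb y) + (y * (c t).1 + T2 y * (c t).2) - logpart mu hb T2 (c t)).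
  apply: funext => t; rewrite /dens lnM ?posrE ?expR_gt0 // expRK /dotT.
  by rewrite addrA [_ * y]mulrC [_ * T2 y]mulrC.
apply: is_derive_eq D _; rewrite dcE add0r.
by rewrite -[y *: _]/(y * dc.1) -[T2 y *: _]/(T2 y * dc.2); ring.
Qed.

End ExpFamilyPartition.

Section Algebra.
Context {F : fieldType}.

Lemma cramer2_eq0 {A B C D : F} (g1 g2 : F) : A * D - C * B != 0 ->
  (A * g1 + B * g2 = 0 /\ C * g1 + D * g2 = 0) <-> (g1 = 0 /\ g2 = 0).
Proof.
move=> det; split=> [[e1 e2]|[-> ->]]; last by rewrite !mulr0 addr0.
have k1 : g1 * (A * D - C * B) = D * (A * g1 + B * g2) - B * (C * g1 + D * g2).
  by ring.
have k2 : g2 * (A * D - C * B) = A * (C * g1 + D * g2) - C * (A * g1 + B * g2).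
  by ring.
by split; apply: (mulIf det); rewrite mul0r ?k1 ?k2 e1 e2 !mulr0 subrr.
Qed.

Lemma subr_mul_eq0_div (X S w : F) : S != 0 -> (X - w * S = 0 <-> w = X / S).
Proof.
move=> S0; split=> [/eqP|->]; last by rewrite divfK // subrr.
by rewrite subr_eq0 => /eqP ->; rewrite mulfK.
Qed.

Lemma sumr_mul_affine (I : Type) (r : seq I) (a y z : I -> F) (A B w v : F) :
  \sum_(n <- r) a n * (A * (y n - w) + B * (z n - v)) =
  A * (\sum_(n <- r) a n * y n - w * \sum_(n <- r) a n) +
  B * (\sum_(n <- r) a n * z n - v * \sum_(n <- r) a n).
Proof.
rewrite !mulrBr !big_distrr -!sumrB -big_split /=.
by apply: eq_bigr => n _; ring.
Qed.

End Algebra.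

Lemma is_derive_zeroP {R : numFieldType} {V W : normedModType R}
    {f : V -> W} {x v : V} {df : W} :
  is_derive x v f df -> (is_derive x v f 0 <-> df = 0).
Proof.
move=> fx; split=> [f0|<-] //.
by rewrite -(@derive_val _ _ _ _ _ _ _ fx) (@derive_val _ _ _ _ _ _ _ f0).
Qed.

Lemma is_derive_sum_scaled {R : realType} {N : nat} {x : R} (c : 'I_N -> R)
    {f : 'I_N -> R -> R} {df : 'I_N -> R} :
  (forall i, is_derive x 1 (f i) (df i)) ->
  is_derive x 1 (fun t => \sum_(i < N) c i * f i t) (\sum_(i < N) c i * df i).
Proof.
move=> fx; have := is_derive_sum (fun i => is_deriveZ (c i) (fx i)).
by rewrite fct_sumE.
Qed.

Lemma sum_select_single {K : pzRingType} {m n : nat} (F F' : 'I_m -> 'I_n -> K)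
    (k : 'I_m -> 'I_n) (i0 : 'I_m) (j0 : 'I_n) :
  (forall i j, (i != i0) || (j != j0) -> F' i j = F i j) ->
  \sum_(i < m) F' i (k i) =
  \sum_(i < m) F i (k i) + (k i0 == j0)%:R * (F' i0 j0 - F i0 j0).
Proof.
move=> FF; rewrite (bigD1 i0) //= [in RHS](bigD1 i0) //= addrAC; congr (_ + _).
  have [->|kj] := eqVneq (k i0) j0; first by rewrite /= mulr1n mul1r addrC subrK.
  by rewrite /= mulr0n mul0r addr0 FF // kj orbT.
by apply: eq_bigr => i ii0; rewrite FF // ii0.
Qed.

Section EfMCA.
Context {R : realType} {mu : {measure set R -> \bar R}} {hb T2 : R -> R}.
Hypotheses (mhb : measurable_fun setT hb) (hb0 : forall y, 0 <= hb y)
  (mT2 : measurable_fun setT T2).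
Context {D H N : nat} {Phi : R * R -> R * R} {Y : 'I_N -> 'I_D -> R}.
Variables (pi : 'I_H -> R) (q : 'I_N -> config H -> R).

Lemma upd_at (W : 'M[R]_(D, H)) d h t : upd W d h t d h = t.
Proof. by rewrite /upd mxE !eqxx. Qed.

Lemma upd_off (W : 'M[R]_(D, H)) d h t i j :
  (i != d) || (j != h) -> upd W d h t i j = W i j.
Proof. by rewrite /upd mxE -negb_and => /negPf ->. Qed.

Section SingleEntry.
Variable i0 : 'I_H.
Context {W V : 'M[R]_(D, H)} {d : 'I_D} {h : 'I_H}.
Let a n := Aexp mu hb T2 Phi q i0 W V d h n.
Let gW := \sum_(n < N) a n * Y n d - W d h * \sum_(n < N) a n.
Let gV := \sum_(n < N) a n * T2 (Y n d) - V d h * \sum_(n < N) a n.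

Lemma Ffix_single_entry (W' V' : 'M[R]_(D, H)) :
  (forall i j, (i != d) || (j != h) -> W' i j = W i j /\ V' i j = V i j) ->
  Ffix mu hb T2 Phi Y q pi i0 W V W' V' =
  Ffix mu hb T2 Phi Y q pi i0 W V W V +
  \sum_(n < N) a n * (ln (dens mu hb T2 (Y n d) (Phi (W' d h, V' d h)))
                      - ln (dens mu hb T2 (Y n d) (Phi (W d h, V d h)))).
Proof.
move=> agree; rewrite /Ffix addrAC; congr (_ + _); rewrite -big_split /=.
apply: eq_bigr => n _; rewrite /a /Aexp mulr_suml -big_split /=.
apply: eq_bigr => s _.
rewrite -mulrA -mulrDr addrAC; congr (_ * (_ + _)).
apply: (sum_select_single
  (fun i j => ln (dens mu hb T2 (Y n i) (Phi (W i j, V i j))))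
  (fun i j => ln (dens mu hb T2 (Y n i) (Phi (W' i j, V' i j))))
  (fun i => hsel mu hb T2 Phi i0 W V i s)).
by move=> i j /agree [-> ->].
Qed.

Lemma is_derive_Ffix_entry (Wt Vt : R -> 'M[R]_(D, H)) (c : R -> R * R)
    (x : R) (dc : R * R) :
  (forall t i j, (i != d) || (j != h) -> Wt t i j = W i j /\ Vt t i j = V i j) ->
  (forall t, Phi (Wt t d h, Vt t d h) = c t) -> c x = Phi (W d h, V d h) ->
  is_derive x 1 c dc -> interior (natparam mu hb T2) (c x) ->
  mean_param mu hb T2 (c x) = (W d h, V d h) -> (forall n, 0 < hb (Y n d)) ->
  is_derive x 1 (fun t => Ffix mu hb T2 Phi Y q pi i0 W V (Wt t) (Vt t))
    (dc.1 * gW + dc.2 * gV).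
Proof.
move=> agree path cx dcx cint mean hY.
have -> : (fun t => Ffix mu hb T2 Phi Y q pi i0 W V (Wt t) (Vt t)) =
    (fun t => Ffix mu hb T2 Phi Y q pi i0 W V W V + \sum_(n < N) a n *
       (ln (dens mu hb T2 (Y n d) (c t)) - ln (dens mu hb T2 (Y n d) (c x)))).
  by apply: funext => t; rewrite (Ffix_single_entry _ _ (agree t)) path cx.
have dn n : is_derive x 1
    (fun t => ln (dens mu hb T2 (Y n d) (c t)) - ln (dens mu hb T2 (Y n d) (c x)))
    (dc.1 * (Y n d - W d h) + dc.2 * (T2 (Y n d) - V d h)).
  rewrite -[X in is_derive _ _ _ X]subr0 (_ : W d h = (mean_param mu hb T2 (c x)).1);
    last by rewrite mean.
  rewrite (_ : V d h = (mean_param mu hb T2 (c x)).2); last by rewrite mean.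
  exact: is_deriveB (is_derive_ln_dens _ _ _ mhb hb0 mT2 _ (hY n) cint dcx)
    (is_derive_cst _ _ _).
have := is_deriveD (is_derive_cst (Ffix mu hb T2 Phi Y q pi i0 W V W V) x 1)
  (is_derive_sum_scaled a dn).
by rewrite add0r -sumr_mul_affine.
Qed.

Lemma is_derive_Ffix_W {J : R * R} :
  is_derive (W d h) 1 (fun t => Phi (t, V d h)) J ->
  interior (natparam mu hb T2) (Phi (W d h, V d h)) ->
  mean_param mu hb T2 (Phi (W d h, V d h)) = (W d h, V d h) ->
  (forall n, 0 < hb (Y n d)) ->
  is_derive (W d h) 1 (fun t => Ffix mu hb T2 Phi Y q pi i0 W V (upd W d h t) V)
    (J.1 * gW + J.2 * gV).
Proof.
apply: (is_derive_Ffix_entry (upd W d h) (fun=> V)) => //.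
- by move=> t i j ij; rewrite upd_off.
- by move=> t; rewrite upd_at.
Qed.

Lemma is_derive_Ffix_V {J : R * R} :
  is_derive (V d h) 1 (fun t => Phi (W d h, t)) J ->
  interior (natparam mu hb T2) (Phi (W d h, V d h)) ->
  mean_param mu hb T2 (Phi (W d h, V d h)) = (W d h, V d h) ->
  (forall n, 0 < hb (Y n d)) ->
  is_derive (V d h) 1 (fun t => Ffix mu hb T2 Phi Y q pi i0 W V W (upd V d h t))
    (J.1 * gW + J.2 * gV).
Proof.
apply: (is_derive_Ffix_entry (fun=> W) (upd V d h)) => //.
- by move=> t i j ij; rewrite upd_off.
- by move=> t; rewrite upd_at.
Qed.

End SingleEntry.
End EfMCA.

Theorem corollary1 (R : realType) (mu : {measure set R -> \bar R})
  (hb T2 : R -> R) (D H N : nat) (Phi : R * R -> R * R)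
  (pi : 'I_H -> R) (W V : 'M[R]_(D, H))
  (Y : 'I_N -> 'I_D -> R) (q : 'I_N -> config H -> R)
  (d : 'I_D) (h : 'I_H) :
  (* exponential family *)
  measurable_fun setT hb -> (forall y, 0 <= hb y) -> measurable_fun setT T2 ->
  (* Phi is the inverse of the mean value parametrization *)
  (forall eta, natparam mu hb T2 eta -> Phi (mean_param mu hb T2 eta) = eta) ->
  (forall wv, (mean_param mu hb T2 @` natparam mu hb T2) wv ->
     natparam mu hb T2 (Phi wv) /\ mean_param mu hb T2 (Phi wv) = wv) ->
  (* model: prior, variational distributions, data *)
  (forall h', 0 < pi h' < 1) ->
  (forall n, (forall s, 0 <= q n s) /\ \sum_(s : config H) q n s = 1) ->
  (forall n d', 0 < hb (Y n d')) ->
  (* regularity at (W_dh, V_dh) *)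
  (mean_param mu hb T2 @` natparam mu hb T2) (W d h, V d h) ->
  interior (natparam mu hb T2) (Phi (W d h, V d h)) ->
  derivable Phi (W d h, V d h) (1, 0) ->
  derivable Phi (W d h, V d h) (0, 1) ->
  let J1 := 'D_(1, 0) Phi (W d h, V d h) in
  let J2 := 'D_(0, 1) Phi (W d h, V d h) in
  J1.1 * J2.2 - J2.1 * J1.2 != 0 ->
  let a := fun n : 'I_N => Aexp mu hb T2 Phi q h W V d h n in
  \sum_(n < N) a n != 0 ->
  grad_vanishes mu hb T2 Phi Y q pi W V d h <->
  (W d h = (\sum_(n < N) a n * Y n d)
             / (\sum_(n < N) a n) /\
   V d h = (\sum_(n < N) a n * T2 (Y n d))
             / (\sum_(n < N) a n)).
Proof.
move=> mhb hb0 mT2 _ Phi_inv _ _ hY img cint dP1 dP2 J1 J2 det a Sa.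
have [_ mean] := Phi_inv _ img.
have dW := is_derive_Ffix_W mhb hb0 mT2 pi q h (is_derive_partial1 dP1) cint mean
  (hY^~ d).
have dV := is_derive_Ffix_V mhb hb0 mT2 pi q h (is_derive_partial2 dP2) cint mean
  (hY^~ d).
rewrite /grad_vanishes (is_derive_zeroP dW) (is_derive_zeroP dV) (cramer2_eq0 _ _ det).
by rewrite !subr_mul_eq0_div.
Qed.
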